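(* Let $q$ be a prime power, $n,k,m$ positive integers, and let $\mathcal C_1,\mathcal C_2$ be two $[n,k,n-k+1]_{q^m/q}$ MRD codes. Then $\mathcal C_1\oplus\mathcal C_2=\{(u\mid v): u\in\mathcal C_1,v\in\mathcal C_2\}\subseteq\mathbb F_{q^m}^{2n}$ is a $[2n,2k]_{q^m/q}$ code whose generalized rank weights are $$d_i(\mathcal C_1\oplus\mathcal C_2)=\begin{cases} n-k+i & \text{if } 1\le i\le k,\\ 2n-2k+i & \text{if } k+1\le i\le 2k.\end{cases}$$
   Context: An $[n,k,d]_{q^m/q}$ code is a $k$-dimensional $\mathbb F_{q^m}$-subspace of $\mathbb F_{q^m}^n$ with minimum rank distance $d$, where the rank weight of $v=(v_1,\ldots,v_n)$ is $\dim_{\mathbb F_q}\langle v_1,\ldots,v_n\rangle_{\mathbb F_q}$ and $d$ is the minimum rank weight of a nonzero codeword. It is MRD if $mk=\min\{m(n-d+1),n(m-d+1)\}$. An $\mathbb F_{q^m}$-subspace $\mathcal A\subseteq\mathbb F_{q^m}^N$ is Galois closed if it is invariant under the coordinatewise $q$-Frobenius map; the $j$-th generalized rank weight of a code $\mathcal C\subseteq\mathbb F_{q^m}^N$ is $d_j(\mathcal C)=\min\{\dim_{\mathbb F_{q^m}}\mathcal A:\mathcal A\text{ Galois closed},\ \dim_{\mathbb F_{q^m}}(\mathcal A\cap\mathcal C)\ge j\}$. *)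

From HB Require Import structures.
From mathcomp Require Import all_boot all_order all_algebra all_field.
Set Implicit Arguments. Unset Strict Implicit. Unset Printing Implicit Defensive.
Import GRing.Theory.
Local Open Scope ring_scope.

(* Convention: F_q is a finite field K (so q := #|K| is a prime power),
   F_{q^m} is a field extension L of K with \dim_K L = m. *)

Section Codes.
Variables (K : finFieldType) (L : fieldExtType K).

(* rank weight: K-dimension of the K-span of the entries of v *)
Definition rank_weight (n : nat) (v : 'rV[L]_n) : nat :=
  \dim (<< [seq v ord0 i | i <- enum 'I_n] >>)%VS.

Definition min_rank_distance (n : nat) (C : {vspace 'rV[L]_n}) (d : nat) : Prop :=
  (exists2 c, c \in C & c != 0 /\ rank_weight c = d) /\
  (forall c, c \in C -> c != 0 -> (d <= rank_weight c)%N).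

Definition is_code (n k d : nat) (C : {vspace 'rV[L]_n}) : Prop :=
  \dim C = k /\ min_rank_distance C d.

Definition is_MRD (m n k d : nat) (C : {vspace 'rV[L]_n}) : Prop :=
  is_code k d C /\ (m * k = minn (m * (n - d + 1)) (n * (m - d + 1)))%N.

Definition frob_vec (N : nat) (v : 'rV[L]_N) : 'rV[L]_N :=
  map_mx (fun x : L => x ^+ #|K|) v.

Definition galois_closed (N : nat) (A : {vspace 'rV[L]_N}) : Prop :=
  forall v, v \in A -> frob_vec v \in A.

Definition is_gen_rank_weight (N : nat) (C : {vspace 'rV[L]_N}) (j d : nat) : Prop :=
  (exists A : {vspace 'rV[L]_N},
      [/\ galois_closed A, (j <= \dim (A :&: C))%N & \dim A = d]) /\
  (forall A : {vspace 'rV[L]_N},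
      galois_closed A -> (j <= \dim (A :&: C))%N -> (d <= \dim A)%N).

Definition code_dsum (n : nat) (C1 C2 : {vspace 'rV[L]_n}) : {vspace 'rV[L]_(n + n)} :=
  (linfun (fun u : 'rV[L]_n => row_mx u (0 : 'rV[L]_n)) @: C1 +
   linfun (fun v : 'rV[L]_n => row_mx (0 : 'rV[L]_n) v) @: C2)%VS.

End Codes.

Arguments is_MRD {K L} m n k d C.

From HB Require Import structures.
From mathcomp Require Import all_boot all_order all_algebra all_field.
From mathcomp Require Import zify.

(** Frobenius descent: a Galois-closed subspace of [F_{q^m}^N] has a basis of
    vectors with entries in [F_q], and a vector in the span of [t] such vectors
    has rank weight at most [t].  Spanning a Galois-closed [B] by such a basis
    and keeping its last [dim B - dim D + 1] vectors yields, for every nonzero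
    [D <= B], a nonzero [x] in [D] with [rk x <= dim B - dim D + 1].  Hence a
    Galois-closed [B] meeting a code of minimum distance [n - k + 1] satisfies
    [dim (B :&: C) <= dim B - (n - k)].

    A Galois-closed [A <= F^(2n)] splits along the projection onto the second
    block into Galois-closed [B1] (first blocks of the vectors of [A] whose
    second block vanishes) and [B2] (second blocks of [A]), with
    [dim A = dim B1 + dim B2] and
    [dim (A :&: C1 (+) C2) <= dim (B1 :&: C1) + dim (B2 :&: C2)]; the bound
    above on both summands gives the lower bound on [d_i], and the coordinate subspace
    spanned by the first [d_i] unit vectors attains it by dimension count. *)

Set Implicit Arguments. Unset Strict Implicit. Unset Printing Implicit Defensive.
Import GRing.Theory.
Local Open Scope ring_scope.

Section GaloisClosedSubspaces.
Variables (K : finFieldType) (L : fieldExtType K).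
Local Notation q := #|K|.

Lemma expr0_card : (0 : L) ^+ q = 0.
Proof. by rewrite expr0n gtn_eqF // ltnW // finNzRing_gt1. Qed.

Lemma frob_fixed_scalarP (x : L) : reflect (x ^+ q = x) (x \in 1%VS).
Proof.
apply: (iffP (vlineP _ _)) => [[a ->] | xqx].
  by rewrite -in_algE -rmorphXn expf_card.
have : root (map_poly (in_alg L) ('X^q - 'X)) x.
  by rewrite rmorphB /= map_polyXn map_polyX rootE !hornerE xqx subrr.
rewrite finField_genPoly rmorph_prod.
under eq_bigr => a _ do rewrite rmorphB /= map_polyX map_polyC.
rewrite -(big_map (in_alg L) xpredT (fun z => 'X - z%:P)) root_prod_XsubC.
by case/mapP=> a _ ->; exists a.
Qed.

Definition frob_fixed N (v : 'rV[L]_N) := frob_vec v == v.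

Lemma frob_fixed_entry N (v : 'rV[L]_N) i : frob_fixed v -> v ord0 i \in 1%VS.
Proof. by move=> /eqP/matrixP/(_ ord0 i); rewrite mxE => /frob_fixed_scalarP. Qed.

Lemma galois_closedI N (A B : {vspace 'rV[L]_N}) :
  galois_closed A -> galois_closed B -> galois_closed (A :&: B).
Proof. by move=> gA gB v; rewrite !memv_cap => /andP[/gA -> /gB ->]. Qed.

Lemma dim_fullrv N : \dim {: 'rV[L]_N} = N.
Proof. by rewrite dimvf /dim /= mul1n. Qed.

Lemma dimv_rV_leq N (U : {vspace 'rV[L]_N}) : (\dim U <= N)%N.
Proof. by rewrite -[N in (_ <= N)%N](dim_fullrv N) dimvS ?subvf. Qed.

Definition coord_space N (P : pred 'I_N) : {vspace 'rV[L]_N} :=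
  <<[seq delta_mx ord0 j | j <- enum P]>>%VS.

Lemma mem_coord_space N (P : pred 'I_N) v :
  (v \in coord_space P) = [forall j, ~~ P j ==> (v ord0 j == 0)].
Proof.
apply/idP/forallP => [vP j | vP]; last first.
  rewrite [v]row_sum_delta; apply: memv_suml => j _.
  have [Pj | /(implyP (vP j))/eqP->] := boolP (P j); last by rewrite scale0r mem0v.
  by rewrite memvZ // memv_span // map_f // mem_enum.
apply/implyP => nPj; rewrite (coord_span vP) summxE; apply/eqP/big1 => t _.
rewrite -tnth_nth tnth_map !mxE.
have : tnth (enum_tuple P) t \in P by rewrite -mem_enum mem_tnth.
by case: (eqVneq j) => [<- Pj | _ _]; [case/negP: nPj | rewrite andbF mulr0].
Qed.

Lemma galois_closed_coord_space N (P : pred 'I_N) : galois_closed (coord_space P).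
Proof.
move=> v; rewrite !mem_coord_space => /forallP vP; apply/forallP => j.
by apply/implyP => /(implyP (vP j))/eqP vj; rewrite mxE vj expr0_card.
Qed.

Lemma dim_coord_space N (P : pred 'I_N) : \dim (coord_space P) = #|P|.
Proof.
have dim_le (Q : pred 'I_N) : (\dim (coord_space Q) <= #|Q|)%N.
  by rewrite (leq_trans (dim_span _)) // size_map cardE.
have : (N <= \dim (coord_space P) + \dim (coord_space [predC P]))%N.
  rewrite -{1}(dim_fullrv N) -dimv_sum_cap (leq_trans _ (leq_addr _ _)) // dimvS //.
  apply/subvP => v _; rewrite [v]row_sum_delta (bigID P) /=.
  by apply: memv_add; apply: memv_suml => j Pj;
    rewrite memvZ // memv_span // map_f // mem_enum.
move=> cover; apply/eqP; rewrite eqn_leq dim_le /=.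
rewrite -(leq_add2r #|[predC P]|) cardC card_ord (leq_trans cover) //.
by rewrite leq_add2l dim_le.
Qed.

Definition row_support N (v : 'rV[L]_N) := [set j | v ord0 j != 0].

Lemma row_support_eq0 N (v : 'rV[L]_N) : (row_support v == set0) = (v == 0).
Proof.
apply/eqP/eqP => [v0 | ->]; last by apply/setP => j; rewrite !inE mxE eqxx.
by apply/rowP => j; have /setP/(_ j) := v0; rewrite !inE mxE => /negbFE/eqP.
Qed.

Lemma galois_closed_frob_fixed_vector N (A : {vspace 'rV[L]_N}) :
  galois_closed A -> A != 0%VS ->
  exists i, exists2 w, w \in A & frob_fixed w /\ w ord0 i = 1.
Proof.
move=> gA A0; have [v vA v0] : exists2 v, v \in A & v != 0.
  by exists (vpick A); rewrite ?memv_pick ?vpick0.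
(* For [u] = [v] normalised at [i], [frob_vec u - u] lies in [A] and has smaller support. *)
have [s] := ubnP #|row_support v|; elim: s v vA v0 => // s IH v vA v0 supp_v.
have [i] : exists i, i \in row_support v.
  by apply/set0Pn; rewrite row_support_eq0.
rewrite inE => vi; pose u := (v ord0 i)^-1 *: v.
have uA : u \in A by rewrite memvZ.
have ui : u ord0 i = 1 by rewrite mxE mulVf.
have [u_fixed | w0] := eqVneq (frob_vec u - u) 0.
  by exists i, u => //; split; rewrite // /frob_fixed -subr_eq0 u_fixed.
apply: (IH _ _ w0); first by rewrite memvB // gA.
rewrite -ltnS (leq_trans _ supp_v) // ltnS proper_card //; apply/properP; split.
  apply/subsetP => j; rewrite !inE !mxE; apply: contraNN => /eqP vj.
  by rewrite vj mulr0 expr0_card subrr.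
by exists i; rewrite !inE ?vi // !mxE mulVf // expr1n subrr eqxx.
Qed.

Lemma galois_closed_frob_fixed_basis N (A : {vspace 'rV[L]_N}) :
  galois_closed A -> exists2 s, all (@frob_fixed N) s & basis_of A s.
Proof.
have [d] := ubnP (\dim A); elim: d A => // d IH A dimA gA.
have [-> | A0] := eqVneq A 0%VS; first by exists [::]; rewrite ?nil_basis.
have [i [w wA [w_fixed wi]]] := galois_closed_frob_fixed_vector gA A0.
pose A' := (A :&: coord_space (predC1 i))%VS.
have memA' x : (x \in A') = (x \in A) && (x ord0 i == 0).
  rewrite memv_cap mem_coord_space; congr (_ && _).
  apply/forallP/eqP => [/(_ i) | xi j]; first by rewrite /= eqxx => /eqP.
  by rewrite negbK; apply/implyP => /eqP->; apply/eqP.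
have ltA' : (\dim A' < \dim A)%N.
  rewrite (ltn_leqif (dimv_leqif_eq (capvSl _ _))); apply/eqP => eqA.
  by move: wA; rewrite -eqA memA' wi oner_eq0 andbF.
have gA' : galois_closed A' by apply/galois_closedI/galois_closed_coord_space.
have [s s_fixed] := IH A' (leq_trans ltA' dimA) gA'.
rewrite basisEdim => /andP[sA's size_s].
exists (w :: s); rewrite /= ?w_fixed // basisEdim /= span_cons.
rewrite (leq_ltn_trans size_s ltA') andbT; apply/subvP => x xA.
rewrite -[x](subrK (x ord0 i *: w)) addrC.
apply: memv_add; first exact: memvZ (memv_line w).
by apply: (subvP sA's); rewrite memA' memvB ?memvZ //= !mxE wi mulr1 subrr.
Qed.

Lemma rank_weight_span_frob_fixed N (s : seq 'rV[L]_N) x :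
  all (@frob_fixed N) s -> x \in <<s>>%VS -> (rank_weight x <= size s)%N.
Proof.
move=> s_fixed xs; have xE := coord_span (X := in_tuple s) xs.
pose c := [seq coord (in_tuple s) t x | t <- enum 'I_(size s)].
apply: (@leq_trans (\dim <<c>>)).
  apply/dimvS/span_subvP => _ /mapP[j _ ->].
  rewrite xE summxE; apply: memv_suml => t _; rewrite mxE.
  have /vlineP[a ->] := frob_fixed_entry j (allP s_fixed _ (mem_nth 0 (ltn_ord t))).
  by rewrite mulr_algr memvZ // memv_span //; apply/mapP; exists t; rewrite ?mem_enum.
by rewrite (leq_trans (dim_span c)) // size_map size_enum_ord.
Qed.

Lemma galois_closed_low_rank_weight N (B D : {vspace 'rV[L]_N}) :
  galois_closed B -> (D <= B)%VS -> D != 0%VS ->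
  exists2 x, x \in D & x != 0 /\ (rank_weight x + \dim D <= \dim B + 1)%N.
Proof.
move=> gB sDB D0; have D_gt0 : (0 < \dim D)%N by rewrite lt0n dimv_eq0.
have [s s_fixed s_basis] := galois_closed_frob_fixed_basis gB.
have size_s : size s = \dim B := esym (size_basis (X := in_tuple s) s_basis).
set W : {vspace 'rV[L]_N} := <<drop (\dim D - 1) s>>%VS.
have drop_fixed : all (@frob_fixed N) (drop (\dim D - 1) s).
  by apply/allP => y /mem_drop; apply: (allP s_fixed).
have sWB : (W <= B)%VS.
  by rewrite -(span_basis s_basis) sub_span // => y /mem_drop.
have dimW : (\dim B <= (\dim D - 1) + \dim W)%N.
  rewrite -{1}(span_basis s_basis) -(cat_take_drop (\dim D - 1) s) span_cat.
  apply: leq_trans (dimv_add_leqif _ _) _.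
  by rewrite leq_add2r (leq_trans (dim_span _)) // size_take_min geq_minl.
have DW0 : (D :&: W != 0)%VS.
  rewrite -dimv_eq0 -lt0n; have := dimv_sum_cap D W.
  have : (\dim (D + W) <= \dim B)%N by rewrite dimvS // subv_add sDB sWB.
  lia.
have /andP[xD xW] : (vpick (D :&: W) \in D) && (vpick (D :&: W) \in W).
  by rewrite -memv_cap memv_pick.
exists (vpick (D :&: W)) => //; split; first by rewrite vpick0.
have := rank_weight_span_frob_fixed drop_fixed xW; rewrite size_drop size_s.
have : (\dim D <= \dim B)%N by rewrite dimvS.
lia.
Qed.

Lemma galois_closed_capv_dim N (B C : {vspace 'rV[L]_N}) d :
  galois_closed B -> (forall c, c \in C -> c != 0 -> (d <= rank_weight c)%N) ->
  (B :&: C != 0)%VS -> (\dim (B :&: C) + d <= \dim B + 1)%N.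
Proof.
move=> gB distC BC0.
have [x xBC [x0 rk_x]] := galois_closed_low_rank_weight gB (capvSl B C) BC0.
by have := distC x (subvP (capvSr B C) x xBC) x0; lia.
Qed.

End GaloisClosedSubspaces.

Section DirectSum.
Variables (K : finFieldType) (L : fieldExtType K) (n : nat).

Definition row_inl (u : 'rV[L]_n) : 'rV[L]_(n + n) := row_mx u 0.
Definition row_inr (v : 'rV[L]_n) : 'rV[L]_(n + n) := row_mx 0 v.

Fact row_inl_linear : linear row_inl.
Proof. by move=> a u v; rewrite /row_inl scale_row_mx add_row_mx scaler0 addr0. Qed.
HB.instance Definition _ := GRing.isLinear.Build L _ _ _ row_inl row_inl_linear.

Fact row_inr_linear : linear row_inr.
Proof. by move=> a u v; rewrite /row_inr scale_row_mx add_row_mx scaler0 addr0. Qed.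
HB.instance Definition _ := GRing.isLinear.Build L _ _ _ row_inr row_inr_linear.

Lemma code_dsumE (C1 C2 : {vspace 'rV[L]_n}) :
  code_dsum C1 C2 = (linfun row_inl @: C1 + linfun row_inr @: C2)%VS.
Proof. by []. Qed.

Lemma mem_code_dsum (C1 C2 : {vspace 'rV[L]_n}) x :
  (x \in code_dsum C1 C2) = (lsubmx x \in C1) && (rsubmx x \in C2).
Proof.
rewrite code_dsumE; apply/memv_addP/andP => [[_ /memv_imgP[u uC1 ->]] | [xC1 xC2]].
  case=> _ /memv_imgP[v vC2 ->] ->.
  by rewrite !lfunE /= /row_inl /row_inr add_row_mx addr0 add0r row_mxKl row_mxKr.
exists (linfun row_inl (lsubmx x)); first exact: memv_img.
exists (linfun row_inr (rsubmx x)); first exact: memv_img.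
by rewrite !lfunE /= /row_inl /row_inr add_row_mx addr0 add0r hsubmxK.
Qed.

Lemma dim_img_row_inl (C : {vspace 'rV[L]_n}) : \dim (linfun row_inl @: C) = \dim C.
Proof.
rewrite limg_dim_eq //; apply/eqP; rewrite -subv0; apply/subvP => u.
by rewrite memv_cap memv_ker memv0 lfunE /= -row_mx0 => /andP[_ /eqP/eq_row_mx[->]].
Qed.

Lemma dim_img_row_inr (C : {vspace 'rV[L]_n}) : \dim (linfun row_inr @: C) = \dim C.
Proof.
rewrite limg_dim_eq //; apply/eqP; rewrite -subv0; apply/subvP => u.
by rewrite memv_cap memv_ker memv0 lfunE /= -row_mx0 => /andP[_ /eqP/eq_row_mx[_ ->]].
Qed.

Lemma dim_code_dsum (C1 C2 : {vspace 'rV[L]_n}) :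
  \dim (code_dsum C1 C2) = (\dim C1 + \dim C2)%N.
Proof.
rewrite code_dsumE dimv_disjoint_sum ?dim_img_row_inl ?dim_img_row_inr //.
apply/eqP; rewrite -subv0; apply/subvP => x; rewrite memv_cap memv0.
case/andP => /memv_imgP[u _ ->] /memv_imgP[v _]; rewrite !lfunE /=.
by case/eq_row_mx => -> _; rewrite /row_inl row_mx0.
Qed.

Lemma frob_vec_lsubmx n1 n2 (x : 'rV[L]_(n1 + n2)) :
  frob_vec (lsubmx x) = lsubmx (frob_vec x).
Proof. by apply/matrixP => i j; rewrite !mxE. Qed.

Lemma frob_vec_rsubmx n1 n2 (x : 'rV[L]_(n1 + n2)) :
  frob_vec (rsubmx x) = rsubmx (frob_vec x).
Proof. by apply/matrixP => i j; rewrite !mxE. Qed.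

Local Notation p1 := (linfun (@lsubmx L 1 n n)).
Local Notation p2 := (linfun (@rsubmx L 1 n n)).

Lemma galois_closed_lsubmx (A : {vspace 'rV[L]_(n + n)}) :
  galois_closed A -> galois_closed (p1 @: A).
Proof.
move=> gA _ /memv_imgP[x xA ->].
by apply/memv_imgP; exists (frob_vec x); rewrite ?gA // !lfunE /= frob_vec_lsubmx.
Qed.

Lemma galois_closed_rsubmx (A : {vspace 'rV[L]_(n + n)}) :
  galois_closed A -> galois_closed (p2 @: A).
Proof.
move=> gA _ /memv_imgP[x xA ->].
by apply/memv_imgP; exists (frob_vec x); rewrite ?gA // !lfunE /= frob_vec_rsubmx.
Qed.

Lemma galois_closed_ker_rsubmx : galois_closed (lker p2).
Proof.
move=> x; rewrite !memv_ker !lfunE /= -frob_vec_rsubmx => /eqP->.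
by apply/eqP/matrixP => i j; rewrite !mxE expr0_card.
Qed.

Lemma dim_lsubmx_ker_rsubmx (A : {vspace 'rV[L]_(n + n)}) :
  (A <= lker p2)%VS -> \dim (p1 @: A) = \dim A.
Proof.
move=> sAker; rewrite limg_dim_eq //; apply/eqP; rewrite -subv0; apply/subvP => x.
rewrite memv_cap memv0 memv_ker lfunE /= => /andP[/(subvP sAker)].
rewrite memv_ker lfunE /= => /eqP xr /eqP xl.
by rewrite -[x]hsubmxK xl xr row_mx0.
Qed.

Lemma galois_closed_split (A : {vspace 'rV[L]_(n + n)}) (C1 C2 : {vspace 'rV[L]_n}) :
  galois_closed A ->
  exists B1 B2 : {vspace 'rV[L]_n},
  [/\ galois_closed B1, galois_closed B2, \dim A = (\dim B1 + \dim B2)%N &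
     (\dim (A :&: code_dsum C1 C2) <= \dim (B1 :&: C1) + \dim (B2 :&: C2))%N].
Proof.
move=> gA; set D := (A :&: code_dsum C1 C2)%VS.
exists (p1 @: (A :&: lker p2))%VS, (p2 @: A)%VS; split.
- exact/galois_closed_lsubmx/galois_closedI/galois_closed_ker_rsubmx.
- exact: galois_closed_rsubmx.
- by rewrite dim_lsubmx_ker_rsubmx ?capvSr // limg_ker_dim.
rewrite -(limg_ker_dim p2 D) leq_add //.
  rewrite -dim_lsubmx_ker_rsubmx ?capvSr //.
  apply/dimvS/subvP => y /memv_imgP[x].
  rewrite !memv_cap mem_code_dsum => /andP[/andP[xA /andP[xC1 _]] xker] ->.
  by rewrite memv_img ?memv_cap ?xA // lfunE.
apply/dimvS/subvP => y /memv_imgP[x].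
rewrite memv_cap mem_code_dsum => /and3P[xA _ xC2] ->.
by rewrite memv_cap memv_img // lfunE.
Qed.

End DirectSum.

Arguments row_inl {K L n}.
Arguments row_inr {K L n}.

Lemma card_ord_ltn N d : (d <= N)%N -> #|[pred t : 'I_N | (t < d)%N]| = d.
Proof.
move=> dN; have widen_inj : injective (widen_ord dN).
  by move=> s t /(congr1 val) /= /val_inj.
rewrite -[RHS]card_ord -(card_image widen_inj).
apply: eq_card => t; rewrite inE; apply/idP/imageP => [td | [s _ ->] //=].
by exists (Ordinal td) => //; apply: val_inj.
Qed.

Lemma dim_capv_ge (K : fieldType) (vT : vectType K) (U V W : {vspace vT}) :
  (U + V <= W)%VS -> (\dim U + \dim V <= \dim W + \dim (U :&: V))%N.
Proof. by move=> /dimvS; rewrite -dimv_sum_cap leq_add2r. Qed.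

Section MRDDirectSum.
Variables (K : finFieldType) (L : fieldExtType K).

Definition prefix_space N d : {vspace 'rV[L]_N} :=
  coord_space L [pred t : 'I_N | (t < d)%N].

Lemma dim_prefix_space N d : (d <= N)%N -> \dim (prefix_space N d) = d.
Proof. by move=> dN; rewrite dim_coord_space card_ord_ltn. Qed.

Lemma prefix_spaceS N d e : (d <= e)%N -> (prefix_space N d <= prefix_space N e)%VS.
Proof.
move=> de; apply/subvP => x; rewrite !mem_coord_space => /forallP xd.
apply/forallP => j; apply/implyP => je; apply: (implyP (xd j)).
by rewrite /= -!leqNgt in je *; lia.
Qed.

Variables (n k : nat) (C1 C2 : {vspace 'rV[L]_n}).
Hypotheses (dimC1 : \dim C1 = k) (dimC2 : \dim C2 = k).
Hypothesis distC1 : forall c, c \in C1 -> c != 0 -> (n - k + 1 <= rank_weight c)%N.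
Hypothesis distC2 : forall c, c \in C2 -> c != 0 -> (n - k + 1 <= rank_weight c)%N.

Definition dsum_weight i :=
  if (i <= k)%N then (n - k + i)%N else (2 * n - 2 * k + i)%N.

Lemma code_dsum_weight_attained i : (i <= 2 * k)%N ->
  exists A : {vspace 'rV[L]_(n + n)},
  [/\ galois_closed A, (i <= \dim (A :&: code_dsum C1 C2))%N & \dim A = dsum_weight i].
Proof.
move=> i_le; have k_le_n : (k <= n)%N by rewrite -dimC1 dimv_rV_leq.
have d_le : (dsum_weight i <= n + n)%N by rewrite /dsum_weight; case: ifP; lia.
exists (prefix_space (n + n) (dsum_weight i)).
split; [exact: galois_closed_coord_space | | exact: dim_prefix_space].
rewrite /dsum_weight; case: ifPn => [i_le_k | i_gt_k].
  set V : {vspace 'rV[L]_(n + n)} := (linfun row_inl @: C1)%VS.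
  have sVC : (V <= code_dsum C1 C2)%VS by rewrite code_dsumE addvSl.
  apply: leq_trans (dimvS (capvS (subvv _) sVC)).
  have sV : (V <= prefix_space (n + n) n)%VS.
    apply/subvP => _ /memv_imgP[u _ ->]; rewrite lfunE mem_coord_space.
    apply/forallP => j; apply/implyP; rewrite /= mxE => j_ge.
    case: splitP => [j1 j_eq | j2 _]; last by rewrite mxE.
    by rewrite j_eq ltn_ord in j_ge.
  have sUV : (prefix_space _ (n - k + i) + V <= prefix_space _ n)%VS.
    by rewrite subv_add sV prefix_spaceS ?andbT //; lia.
  have := dim_capv_ge sUV.
  by rewrite dim_img_row_inl dimC1 !dim_prefix_space ?leq_addr //; lia.
have := dim_capv_ge (subvf (prefix_space _ (2 * n - 2 * k + i) + code_dsum C1 C2)).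
by rewrite dim_fullrv dim_code_dsum dimC1 dimC2 dim_prefix_space //; lia.
Qed.

Lemma code_dsum_weight_minimal i (A : {vspace 'rV[L]_(n + n)}) :
  (0 < i)%N -> galois_closed A -> (i <= \dim (A :&: code_dsum C1 C2))%N ->
  (dsum_weight i <= \dim A)%N.
Proof.
move=> i_gt0 gA iA; have k_le_n : (k <= n)%N by rewrite -dimC1 dimv_rV_leq.
have [B1 [B2 [gB1 gB2 dimA dimAC]]] := galois_closed_split C1 C2 gA.
have le1 : (\dim (B1 :&: C1) <= k)%N by rewrite -dimC1 dimvS ?capvSr.
have le2 : (\dim (B2 :&: C2) <= k)%N by rewrite -dimC2 dimvS ?capvSr.
have := galois_closed_capv_dim gB1 distC1; have := galois_closed_capv_dim gB2 distC2.
rewrite -!dimv_eq0 -!lt0n /dsum_weight; case: ifP; lia.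
Qed.

End MRDDirectSum.

Theorem proposition4p10 (K : finFieldType) (L : fieldExtType K) (n k m : nat)
  (C1 C2 : {vspace 'rV[L]_n}) :
  (0 < n)%N -> (0 < k)%N -> (0 < m)%N -> \dim {:L} = m ->
  is_MRD m n k (n - k + 1) C1 -> is_MRD m n k (n - k + 1) C2 ->
  \dim (code_dsum C1 C2) = (2 * k)%N /\
  (forall i, (1 <= i <= 2 * k)%N ->
     is_gen_rank_weight (code_dsum C1 C2) i
       (if (i <= k)%N then (n - k + i)%N else (2 * n - 2 * k + i)%N)).
Proof.
move=> _ _ _ _ [[dimC1 [_ distC1]] _] [[dimC2 [_ distC2]] _].
split; first by rewrite dim_code_dsum dimC1 dimC2 mul2n addnn.
move=> i /andP[i_gt0 i_le]; split; first exact: code_dsum_weight_attained.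
by move=> A; apply: code_dsum_weight_minimal.
Qed.
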